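(* Let $q$ be a power of the odd prime $p$, let $d$ be a positive integer such that $f(x)=x^d$ is a planar function on $\mathbb F_{q^2}$. For $c\in\mathbb F_{q^2}^*$ and $\sigma\in\mathrm{Gal}(\mathbb F_{q^2}/\mathbb F_p)$ define $\gamma_{c,\sigma}$ on the points of $\Pi(f)$ by $(x,y)\mapsto(\sigma(cx),\sigma(c^dy))$, $(a)\mapsto(\sigma(ca))$ for $a\in\mathbb F_{q^2}$, and $(\infty)\mapsto(\infty)$. Then each $\gamma_{c,\sigma}$ is a collineation of $\Pi(f)$, and all $\gamma_{c,\sigma}$ together form a group $\Gamma$ of collineations of $\Pi(f)$. Moreover, for any $\theta,\theta'\in\mathbb F_{q^2}^*$ such that $\theta^{q+1}$ and $\theta'^{q+1}$ are nonsquares in $\mathbb F_q$, the sets $\mathcal U_\theta$ and $\mathcal U_{\theta'}$ are equivalent, i.e.\ some collineation of $\Pi(f)$ maps $\mathcal U_\theta$ onto $\mathcal U_{\theta'}$.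
   Context: A function $f:\mathbb F_{q^2}\to\mathbb F_{q^2}$ is planar if for every $a\neq0$ the map $x\mapsto f(x+a)-f(x)$ is a bijection. For planar $f$, $\Pi(f)$ is the projective plane with points $(x,y)\in\mathbb F_{q^2}^2$ and $(a)$ for $a\in\mathbb F_{q^2}\cup\{\infty\}$, and lines $L_{a,b}=\{(x,f(x+a)-b):x\in\mathbb F_{q^2}\}\cup\{(a)\}$, $N_a=\{(a,y):y\in\mathbb F_{q^2}\}\cup\{(\infty)\}$ ($a,b\in\mathbb F_{q^2}$), $L_\infty=\{(a):a\in\mathbb F_{q^2}\cup\{\infty\}\}$, incidence being membership. A collineation is a bijection on points mapping lines onto lines. For $\theta\in\mathbb F_{q^2}^*$, $\mathcal U_\theta:=\{(x,t\theta):x\in\mathbb F_{q^2},t\in\mathbb F_q\}\cup\{(\infty)\}$. *)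

From HB Require Import structures.
From mathcomp Require Import all_boot all_order all_algebra all_field.
Set Implicit Arguments. Unset Strict Implicit. Unset Printing Implicit Defensive.
Import GRing.Theory.
Local Open Scope ring_scope.

Definition planar (F : finFieldType) (f : F -> F) : Prop :=
  forall a : F, a != 0 -> bijective (fun x => f (x + a) - f x).

(* Points of Pi(f): affine points (x,y), and points (a) for a in F
   (Inf (Some a)) or a = infinity (Inf None). *)
Inductive point (F : Type) :=
  | Aff of F & F
  | Inf of option F.

Inductive line (F : Type) :=
  | Lab of F & F
  | Nl of F
  | Linf.

Arguments Inf {F}.
Arguments Linf {F}.

Definition incident (F : finFieldType) (f : F -> F) (P : point F) (l : line F)
  : bool :=
  match l, P with
  | Lab a b, Aff x y => y == f (x + a) - b
  | Lab a _, Inf (Some a') => a' == a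
  | Lab _ _, Inf None => false
  | Nl a, Aff x _ => x == a
  | Nl _, Inf (Some _) => false
  | Nl _, Inf None => true
  | Linf, Aff _ _ => false
  | Linf, Inf _ => true
  end.

Definition collineation (F : finFieldType) (f : F -> F) (g : point F -> point F)
  : Prop :=
  bijective g /\
  forall l : line F, exists l' : line F,
    forall P : point F, incident f P l' <-> exists2 Q, incident f Q l & g Q = P.

Definition gamma (F : finFieldType) (d : nat) (c : F) (sigma : F -> F)
  (P : point F) : point F :=
  match P with
  | Aff x y => Aff (sigma (c * x)) (sigma (c ^+ d * y))
  | Inf (Some a) => Inf (Some (sigma (c * a)))
  | Inf None => Inf None
  end.

(* Elements of Gal(F/F_p): field automorphisms of F (every ring automorphism
   fixes the prime field). *)
Definition galFp (F : finFieldType) (sigma : {rmorphism F -> F}) : Prop :=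
  bijective sigma.

Definition inFq (F : finFieldType) (q : nat) (t : F) : bool := t ^+ q == t.

Definition Uset (F : finFieldType) (q : nat) (theta : F) (P : point F) : Prop :=
  match P with
  | Aff x y => exists2 t, inFq q t & y = t * theta
  | Inf None => True
  | Inf (Some _) => False
  end.

Definition nonsquare_Fq (F : finFieldType) (q : nat) (s : F) : Prop :=
  ~ exists2 r, inFq q r & r ^+ 2 = s.

From HB Require Import structures.
From mathcomp Require Import all_boot all_order all_algebra all_field cyclic.
Import GRing.Theory.
Set Implicit Arguments. Unset Strict Implicit.
Local Open Scope ring_scope.

(* A map gamma_{c,sigma} scales x by c and y by c^d and then applies the field
   automorphism sigma; as x^d is multiplicative and commutes with sigma, it
   sends L_{a,b} to L_{sigma(ca),sigma(c^d b)} and N_a to N_{sigma(ca)}, and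
   these maps compose like the semidirect product of F^* by Aut F.
   For the equivalence: an element of F_{q^2} whose norm is a nonsquare of F_q
   is a nonsquare of F_{q^2}, so theta' = theta m^2.  Planarity of x^d forces d
   to be even and x^d = y^d only for y = +-x, so x^d and x^2 have the same
   image and m^2 = c^d for some c; then gamma_{c,1} maps U_theta onto
   U_theta'. *)

Section FieldMorphismInverse.
Variables (F : finFieldType) (s : {rmorphism F -> F}).

Definition fmorph_invF : F -> F := invF (fmorph_inj s).

Lemma f_fmorph_invF : cancel fmorph_invF s. Proof. exact: f_invF. Qed.
Lemma fmorph_invF_f : cancel s fmorph_invF. Proof. exact: invF_f. Qed.

Fact fmorph_invF_is_nmod_morphism : nmod_morphism fmorph_invF.
Proof.
split=> [|x y]; apply: (fmorph_inj s).
  by rewrite f_fmorph_invF rmorph0.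
by rewrite rmorphD !f_fmorph_invF.
Qed.
HB.instance Definition _ :=
  GRing.isNmodMorphism.Build F F fmorph_invF fmorph_invF_is_nmod_morphism.

Fact fmorph_invF_is_monoid_morphism : monoid_morphism fmorph_invF.
Proof.
split=> [|x y]; apply: (fmorph_inj s).
  by rewrite f_fmorph_invF rmorph1.
by rewrite rmorphM !f_fmorph_invF.
Qed.
HB.instance Definition _ :=
  GRing.isMonoidMorphism.Build F F fmorph_invF fmorph_invF_is_monoid_morphism.

Lemma galFp_rmorph : galFp s.
Proof. exact: Bijective fmorph_invF_f f_fmorph_invF. Qed.

End FieldMorphismInverse.

Section Gamma.
Variables (F : finFieldType) (d : nat).
Implicit Types (c : F) (sigma : {rmorphism F -> F}).

Definition gamma_line c (sigma : F -> F) (l : line F) : line F :=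
  match l with
  | Lab a b => Lab (sigma (c * a)) (sigma (c ^+ d * b))
  | Nl a => Nl (sigma (c * a))
  | Linf => Linf
  end.

Lemma incident_gamma c sigma l P : c != 0 ->
  incident (fun x => x ^+ d) (gamma d c sigma P) (gamma_line c sigma l) =
  incident (fun x => x ^+ d) P l.
Proof.
move=> c0; have cd0 : c ^+ d != 0 by rewrite expf_neq0.
case: l => [a b|a|]; case: P => [x y|[a'|]] //=.
- rewrite -rmorphD -rmorphXn -rmorphB (inj_eq (fmorph_inj _)).
  by rewrite -mulrDr exprMn -mulrBr (inj_eq (mulfI cd0)).
- by rewrite (inj_eq (fmorph_inj _)) (inj_eq (mulfI c0)).
- by rewrite (inj_eq (fmorph_inj _)) (inj_eq (mulfI c0)).
Qed.

Lemma gamma_id : gamma d (1 : F) idfun =1 id.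
Proof. by case=> [x y|[a|]] //=; rewrite ?expr1n !mul1r. Qed.

Lemma gammaM c1 c2 (s1 : F -> F) sigma2 P :
  gamma d c1 s1 (gamma d c2 sigma2 P) =
  gamma d (fmorph_invF sigma2 c1 * c2) (s1 \o sigma2) P.
Proof.
have s2K := f_fmorph_invF sigma2.
by case: P => [x y|[a|]] //=;
  rewrite -!mulrA ?exprMn -?mulrA !rmorphM ?rmorphXn s2K.
Qed.

Lemma gammaK c sigma : c != 0 ->
  cancel (gamma d c sigma) (gamma d (sigma c^-1) (fmorph_invF sigma)).
Proof.
move=> c0 P; rewrite gammaM fmorph_invF_f mulVf //.
by case: P => [x y|[a|]] //=; rewrite ?expr1n !mul1r !fmorph_invF_f.
Qed.

Lemma gammaVK c sigma : c != 0 ->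
  cancel (gamma d (sigma c^-1) (fmorph_invF sigma)) (gamma d c sigma).
Proof.
move=> c0; case=> [x y|[a|]] //=;
  by rewrite -?rmorphXn !rmorphM !f_fmorph_invF !mulrA -!rmorphM ?exprVn
             !mulfV ?expf_neq0 // rmorph1 !mul1r.
Qed.

Lemma gamma_collineation c sigma : c != 0 ->
  collineation (fun x => x ^+ d) (gamma d c sigma).
Proof.
move=> c0; split; first exact: Bijective (gammaK sigma c0) (gammaVK sigma c0).
move=> l; exists (gamma_line c sigma l) => P; split=> [lP|[Q lQ <-]].
  exists (gamma d (sigma c^-1) (fmorph_invF sigma) P); last exact: gammaVK.
  by rewrite -(incident_gamma sigma l _ c0) gammaVK.
by rewrite incident_gamma.
Qed.

Lemma gamma_Uset q c theta theta' P : c != 0 -> c ^+ d * theta = theta' ->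
  Uset q theta' P <-> exists2 Q, Uset q theta Q & gamma d c idfun Q = P.
Proof.
move=> c0 <-; case: P => [x y|[a|]] /=; split=> //.
- case=> t tq ->; exists (Aff (c^-1 * x) (t * theta)); first by exists t.
  by rewrite /= mulVKf // mulrCA.
- case=> [[x' y'|[a'|]]] //= [t tq ->] [_ <-].
  by exists t; rewrite // mulrCA.
- by case=> [[x' y'|[a'|]]].
- by exists (Inf None).
Qed.

End Gamma.

Section PlanarMonomial.
Variables (F : finFieldType) (d : nat).
Hypotheses (d_gt0 : (0 < d)%N) (planar_d : planar (fun x : F => x ^+ d)).

Let D (x : F) := (x + 1) ^+ d - x ^+ d.

Let D_inj : injective D.
Proof. exact: bij_inj (planar_d (oner_neq0 F)). Qed.

Lemma planar_monomial_even : ~~ odd d.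
Proof.
apply/negP => d_odd; have : D 0 = D (-1).
  rewrite /D addNr add0r expr0n (gtn_eqF d_gt0) expr1n subr0 sub0r.
  by rewrite -signr_odd d_odd expr1 opprK.
by move/D_inj/eqP; rewrite eq_sym oppr_eq0 oner_eq0.
Qed.

Lemma planar_monomialN (x : F) : (- x) ^+ d = x ^+ d.
Proof.
by rewrite -mulN1r exprMn -signr_odd (negbTE planar_monomial_even) mul1r.
Qed.

Hypothesis two_neq0 : (2%:R : F) != 0.

Lemma planar_monomial_root1 (w : F) : w ^+ d = 1 -> w = 1 \/ w = -1.
Proof.
move=> wd1; have [->|w_neq1] := eqVneq w 1; [by left | right].
(* With w y = y + 2, both D (y + 1) and D (- (y + 1)) equal y^d - (y + 1)^d. *)
pose y := 2%:R / (w - 1).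
have wy : w * y = y + 2%:R.
  have : (w - 1) * y = 2%:R by rewrite mulrCA divff ?mulr1 // subr_eq0.
  by rewrite mulrBl mul1r => /eqP; rewrite subr_eq addrC => /eqP.
have : D (y + 1) = D (- (y + 1)).
  rewrite /D -addrA -(natrD F 1 1) -wy exprMn wd1 mul1r planar_monomialN.
  by rewrite opprD addrNK planar_monomialN.
move/D_inj/eqP; rewrite -subr_eq0 opprK -mulr2n -mulr_natr mulf_eq0.
rewrite (negbTE two_neq0) orbF addr_eq0 => /eqP y_eq.
move: wy; rewrite y_eq mulrN1 (natrD F 1 1) addKr => /eqP.
by rewrite eqr_oppLR => /eqP.
Qed.

Lemma eq_planar_monomial (x y : F) : x ^+ d = y ^+ d -> x = y \/ x = - y.
Proof.
move=> xy; have [y0|y_neq0] := eqVneq y 0.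
  move: xy; rewrite y0 expr0n (gtn_eqF d_gt0) => /eqP.
  by rewrite expf_eq0 => /andP[_ /eqP]; left.
have : (x / y) ^+ d = 1 by rewrite expr_div_n xy divff // expf_neq0.
case/planar_monomial_root1 => /(canRL (divfK y_neq0)) ->.
  by rewrite mul1r; left.
by rewrite mulN1r; right.
Qed.

Lemma planar_monomial_image : [set x ^+ d | x : F] = [set x ^+ 2 | x : F].
Proof.
have [e de] : exists e, d = (2 * e)%N.
  exists d./2.
  by rewrite mul2n -{1}(odd_double_half d) (negbTE planar_monomial_even).
have d_sub_2 : [set x ^+ d | x : F] \subset [set x ^+ 2 | x : F].
  by apply/subsetP => _ /imsetP[x _ ->]; rewrite de mulnC exprM; apply: imset_f.
have e_inj : {in [set x ^+ 2 | x : F] &, injective (fun z : F => z ^+ e)}.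
  move=> _ _ /imsetP[x _ ->] /imsetP[y _ ->] /=; rewrite -!exprM -de.
  by case/eq_planar_monomial => ->; rewrite ?sqrrN.
apply/eqP; rewrite eqEcard d_sub_2 -(card_in_imset e_inj) subset_leq_card //.
apply/subsetP => _ /imsetP[_ /imsetP[x _ ->] ->].
by rewrite /= -exprM -de; apply: imset_f.
Qed.

Lemma planar_monomial_sqr (m : F) :
  m != 0 -> exists2 c : F, c != 0 & c ^+ d = m ^+ 2.
Proof.
move=> m_neq0; have : m ^+ 2 \in [set x ^+ d | x : F].
  by rewrite planar_monomial_image; apply: imset_f.
case/imsetP=> c _ mc; exists c => //.
apply: contraTneq (expf_neq0 2 m_neq0) => c0.
by rewrite mc c0 expr0n (gtn_eqF d_gt0) eqxx.
Qed.

End PlanarMonomial.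

Section FiniteFieldSquares.
Variable F : finFieldType.

Lemma finField_two_neq0 p n :
  prime p -> odd p -> #|F| = (p ^ n)%N -> (2%:R : F) != 0.
Proof.
move=> p_pr p_odd cardF; have pFp := card_finPcharP cardF p_pr.
by rewrite -(dvdn_pcharf pFp) dvdn_prime2 //; apply: contraTneq p_odd => ->.
Qed.

Lemma expf_card_pred (x : F) : x != 0 -> x ^+ #|F|.-1 = 1.
Proof.
move=> x_neq0; apply: (mulIf x_neq0).
by rewrite mul1r -exprSr prednK ?expf_card // ltnW ?finNzRing_gt1.
Qed.

Lemma nonsquare_Fq_norm q (t : F) : #|F| = (q * q)%N ->
  nonsquare_Fq q (t ^+ q.+1) -> ~ exists r, r ^+ 2 = t.
Proof.
move=> cardF + [r r_t]; rewrite -r_t; apply; exists (r ^+ q.+1).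
  by rewrite /inFq -exprM mulSn exprD -cardF expf_card -exprSr.
by rewrite -!exprM mulnC.
Qed.

Lemma finField_prim_root : exists g : F, #|F|.-1.-primitive_root g.
Proof.
have N_gt0 : (0 < #|F|.-1)%N.
  by rewrite -ltnS prednK ?finNzRing_gt1 // ltnW ?finNzRing_gt1.
have : has #|F|.-1.-primitive_root (enum (predC1 (0 : F))).
  apply: has_prim_root => //; last by rewrite -cardE cardC1.
    by apply/allP => x; rewrite mem_enum unity_rootE => /expf_card_pred ->.
  exact: enum_uniq.
by case/hasP => g _; exists g.
Qed.

Lemma nonsquare_mul_sqr (t t' : F) : odd #|F| ->
    ~ (exists r, r ^+ 2 = t) -> ~ (exists r, r ^+ 2 = t') ->
  exists m, t' = t * m ^+ 2.
Proof.
move=> F_odd; have [g g_prim] := finField_prim_root.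
have odd_log u : ~ (exists r, r ^+ 2 = u) -> exists2 i, u = g ^+ i & odd i.
  move=> u_nsq; have u_neq0 : u != 0.
    by apply: contra_not_neq u_nsq => ->; exists 0; rewrite expr0n.
  have [i u_eq] := prim_rootP g_prim (expf_card_pred u_neq0).
  exists i => //; apply/negPn/negP => i_even; apply: u_nsq; exists (g ^+ i./2).
  by rewrite u_eq -exprM muln2 -[in RHS](odd_double_half i) (negbTE i_even).
move=> /odd_log[i -> i_odd] /odd_log[j -> j_odd].
have [M cardF] : exists M, #|F| = M.+2.
  by exists #|F|.-2; rewrite -addn2 -subn2 subnK ?finNzRing_gt1.
rewrite cardF /= negbK in F_odd g_prim.
pose z := (j + i * M)%N.
have z_half : z./2.*2 = z.
  by rewrite -[RHS]odd_double_half /z oddD oddM j_odd i_odd F_odd.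
exists (g ^+ z./2); rewrite -exprM muln2 z_half -exprD /z.
rewrite addnCA [(i + _)%N]addnC -mulnSr.
by rewrite exprD mulnC exprM (prim_expr_order g_prim) expr1n mulr1.
Qed.

End FiniteFieldSquares.

Theorem proposition3p3 (p k : nat) (F : finFieldType) (d : nat) :
  prime p -> odd p -> (0 < k)%N ->
  #|F| = ((p ^ k) ^ 2)%N ->
  (0 < d)%N ->
  planar (fun x : F => x ^+ d) ->
  let q := (p ^ k)%N in
  let f := fun x : F => x ^+ d in
  (* each gamma_{c,sigma} is a collineation *)
  (forall (c : F) (sigma : {rmorphism F -> F}),
      c != 0 -> galFp sigma -> collineation f (gamma d c sigma)) /\
  (* the gamma_{c,sigma} form a group: identity, composition, inverses *)
  (exists (c : F) (sigma : {rmorphism F -> F}),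
      [/\ c != 0, galFp sigma & forall P, gamma d c sigma P = P]) /\
  (forall (c1 c2 : F) (s1 s2 : {rmorphism F -> F}),
      c1 != 0 -> c2 != 0 -> galFp s1 -> galFp s2 ->
      exists (c3 : F) (s3 : {rmorphism F -> F}),
        [/\ c3 != 0, galFp s3 &
            forall P, gamma d c1 s1 (gamma d c2 s2 P) = gamma d c3 s3 P]) /\
  (forall (c : F) (sigma : {rmorphism F -> F}),
      c != 0 -> galFp sigma ->
      exists (c' : F) (s' : {rmorphism F -> F}),
        [/\ c' != 0, galFp s' &
            forall P, gamma d c' s' (gamma d c sigma P) = P /\
                      gamma d c sigma (gamma d c' s' P) = P]) /\
  (* U_theta and U_theta' are equivalent *)
  (forall theta theta' : F,
      theta != 0 -> theta' != 0 ->
      nonsquare_Fq q (theta ^+ q.+1) -> nonsquare_Fq q (theta' ^+ q.+1) ->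
      exists g : point F -> point F,
        collineation f g /\
        forall P, Uset q theta' P <-> exists2 Q, Uset q theta Q & g Q = P).
Proof.
move=> p_pr p_odd _ cardF d_gt0 planar_d q f.
have two_neq0 : (2%:R : F) != 0.
  by apply: (finField_two_neq0 (n := k * 2) p_pr p_odd); rewrite cardF expnM.
have cardFq : #|F| = (q * q)%N by rewrite cardF mulnn.
split; first by move=> c sigma c_neq0 _; apply: gamma_collineation.
split.
  exists 1, idfun.
  by split; [exact: oner_neq0 | exact: galFp_rmorph | exact: gamma_id].
split.
  move=> c1 c2 s1 s2 c1_neq0 c2_neq0 _ _.
  exists (fmorph_invF s2 c1 * c2), (s1 \o s2); split; last exact: gammaM.
    by rewrite mulf_neq0 // fmorph_eq0.
  exact: galFp_rmorph.
split.
  move=> c sigma c_neq0 _; exists (sigma c^-1), (fmorph_invF sigma).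
  split; [by rewrite fmorph_eq0 invr_eq0 | exact: galFp_rmorph | ].
  by move=> P; rewrite gammaK ?gammaVK.
move=> th th' _ th'_neq0 th_nsq th'_nsq.
have F_odd : odd #|F| by rewrite cardF !oddX p_odd !orbT.
have [m th'E] := nonsquare_mul_sqr F_odd (nonsquare_Fq_norm cardFq th_nsq)
                                         (nonsquare_Fq_norm cardFq th'_nsq).
have m_neq0 : m != 0.
  by apply: contraNneq th'_neq0 => m0; rewrite th'E m0 expr0n mulr0.
have [c c_neq0 cm] := planar_monomial_sqr d_gt0 planar_d two_neq0 m_neq0.
exists (gamma d c idfun); split.
  exact: (gamma_collineation d idfun c_neq0).
by move=> P; apply: gamma_Uset; rewrite // cm mulrC th'E.
Qed.
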